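(* Let $V$ be a commutative unital quantale whose underlying lattice is a frame. Every regular epimorphism in $\mathsf{VGrp}$ is both open and proper.
   Context: A commutative unital quantale $V$ is a complete lattice with a commutative associative operation $\otimes$ with unit $k$ preserving arbitrary joins in each variable; standing assumption: as a lattice $V$ is a frame. A $V$-category $(X,a)$: $a\colon X\times X\to V$ with $k\le a(x,x)$ and $a(x,x')\otimes a(x',x'')\le a(x,x'')$. A $V$-group $(X,a,+)$ is a $V$-category with a group structure (additive, not necessarily abelian) such that $a(x_1,x_2)\otimes a(x_1',x_2')\le a(x_1+x_1',x_2+x_2')$; $V$-homomorphisms are group homomorphisms $f$ with $a(x,x')\le b(f(x),f(x'))$; category $\mathsf{VGrp}$. A $V$-functor $f\colon(X,a)\to(Y,b)$ is proper if $b(f(x),y)=\bigvee\{a(x,x')\mid f(x')=y\}$ for all $x\in X$, $y\in Y$, and open if $b(y,f(x))=\bigvee\{a(x',x)\mid f(x')=y\}$ for all $x\in X$, $y\in Y$ (empty joins being $\bot$). *)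

Set Implicit Arguments.

Record Quantale := {
  qcar :> Type;
  qle : qcar -> qcar -> Prop;
  qle_refl : forall x, qle x x;
  qle_trans : forall x y z, qle x y -> qle y z -> qle x z;
  qle_antisym : forall x y, qle x y -> qle y x -> x = y;
  qjoin : (qcar -> Prop) -> qcar;
  qjoin_ub : forall (S : qcar -> Prop) x, S x -> qle x (qjoin S);
  qjoin_lub : forall (S : qcar -> Prop) y, (forall x, S x -> qle x y) -> qle (qjoin S) y;
  qtens : qcar -> qcar -> qcar;
  qk : qcar;
  qtens_comm : forall x y, qtens x y = qtens y x;
  qtens_assoc : forall x y z, qtens x (qtens y z) = qtens (qtens x y) z;
  qtens_k_l : forall x, qtens qk x = x;
  qtens_k_r : forall x, qtens x qk = x;
  qtens_join_l : forall (S : qcar -> Prop) a,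
      qtens (qjoin S) a = qjoin (fun y => exists x, S x /\ y = qtens x a);
  qtens_join_r : forall a (S : qcar -> Prop),
      qtens a (qjoin S) = qjoin (fun y => exists x, S x /\ y = qtens a x)
}.

Definition qmeet (V : Quantale) (a b : V) : V :=
  qjoin V (fun c => qle V c a /\ qle V c b).

Definition is_frame (V : Quantale) : Prop :=
  forall (a : V) (S : V -> Prop),
    qmeet V a (qjoin V S) = qjoin V (fun y => exists x, S x /\ y = qmeet V a x).

Record VGroup (V : Quantale) := {
  vg_car :> Type;
  vg_a : vg_car -> vg_car -> V;
  vg_add : vg_car -> vg_car -> vg_car;
  vg_zero : vg_car;
  vg_opp : vg_car -> vg_car;
  vg_addA : forall x y z, vg_add x (vg_add y z) = vg_add (vg_add x y) z;
  vg_add0l : forall x, vg_add vg_zero x = x;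
  vg_add0r : forall x, vg_add x vg_zero = x;
  vg_addNl : forall x, vg_add (vg_opp x) x = vg_zero;
  vg_addNr : forall x, vg_add x (vg_opp x) = vg_zero;
  vg_refl : forall x, qle V (qk V) (vg_a x x);
  vg_trans : forall x y z, qle V (qtens V (vg_a x y) (vg_a y z)) (vg_a x z);
  vg_compat : forall x1 x2 y1 y2,
      qle V (qtens V (vg_a x1 x2) (vg_a y1 y2)) (vg_a (vg_add x1 y1) (vg_add x2 y2))
}.

Definition is_VHom (V : Quantale) (X Y : VGroup V) (f : X -> Y) : Prop :=
  (forall x y, f (vg_add X x y) = vg_add Y (f x) (f y)) /\
  (forall x x', qle V (vg_a X x x') (vg_a Y (f x) (f x'))).

Arguments is_VHom {V X Y} f.

Definition regular_epi (V : Quantale) (X Y : VGroup V) (f : X -> Y) : Prop :=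
  is_VHom f /\
  exists (Z : VGroup V) (g h : Z -> X),
    is_VHom g /\ is_VHom h /\ (forall z, f (g z) = f (h z)) /\
    forall (W : VGroup V) (k : X -> W),
      is_VHom k -> (forall z, k (g z) = k (h z)) ->
      exists u : Y -> W,
        is_VHom u /\ (forall x, u (f x) = k x) /\
        forall u' : Y -> W, is_VHom u' -> (forall x, u' (f x) = k x) ->
          forall y, u' y = u y.

Arguments regular_epi {V X Y} f.

Definition is_proper (V : Quantale) (X Y : VGroup V) (f : X -> Y) : Prop :=
  forall (x : X) (y : Y),
    vg_a Y (f x) y = qjoin V (fun v => exists x', f x' = y /\ v = vg_a X x x').

Definition is_open (V : Quantale) (X Y : VGroup V) (f : X -> Y) : Prop :=
  forall (x : X) (y : Y),
    vg_a Y y (f x) = qjoin V (fun v => exists x', f x' = y /\ v = vg_a X x' x).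

Arguments is_proper {V X Y} f.
Arguments is_open {V X Y} f.

From Stdlib Require Import ProofIrrelevance.

Set Implicit Arguments.
Unset Strict Implicit.

(* For a homomorphism f : X -> Y, put on its image the final
   structure d(y, y') = \/ {a(x, x') | f x = y, f x' = y'}.  Translations of a
   V-group are V-functors, so any pair (x1, x2) in the fibres over (f x, y) can
   be translated to a pair (x, x2') over the same points without decreasing
   a(x1, x2); hence d(f x, y) = \/ {a(x, x') | f x' = y} and dually.  The image
   with d is again a V-group, and a coequalizer f factors through it; by
   uniqueness of factorizations the factorization is a section of the
   inclusion, which forces b <= d, i.e. b = d. *)

Local Notation "a ⊑ b" := (qle _ a b) (at level 70).
Local Notation "a ⊗ b" := (qtens _ a b) (at level 40, left associativity).
Local Notation "x + y" := (vg_add _ x y).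
Local Notation "- x" := (vg_opp _ x).

Section QuantaleFacts.
Variable V : Quantale.

Lemma qtens_mono_l (a b c : V) : a ⊑ b -> a ⊗ c ⊑ b ⊗ c.
Proof.
  intros le_ab.
  assert (join_ab : qjoin V (fun z => z = a \/ z = b) = b).
  { apply qle_antisym.
    - apply qjoin_lub; intros z [-> | ->]; [exact le_ab | apply qle_refl].
    - apply qjoin_ub; now right. }
  rewrite <- join_ab, qtens_join_l.
  apply qjoin_ub; exists a; auto.
Qed.

Lemma qtens_mono (a b c d : V) : a ⊑ b -> c ⊑ d -> a ⊗ c ⊑ b ⊗ d.
Proof.
  intros le_ab le_cd; apply qle_trans with (b ⊗ c).
  - now apply qtens_mono_l.
  - rewrite (qtens_comm V b c), (qtens_comm V b d); now apply qtens_mono_l.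
Qed.

Lemma qtens_join_lub (S T : V -> Prop) (c : V) :
  (forall s t, S s -> T t -> s ⊗ t ⊑ c) -> qjoin V S ⊗ qjoin V T ⊑ c.
Proof.
  intros le_c.
  rewrite qtens_join_l; apply qjoin_lub; intros v [s [Ss ->]].
  rewrite qtens_join_r; apply qjoin_lub; intros w [t [Tt ->]].
  now apply le_c.
Qed.

End QuantaleFacts.

Section VGroupFacts.
Variable V : Quantale.

Lemma vg_a_addr (X : VGroup V) (x x' n : X) : vg_a X x x' ⊑ vg_a X (x + n) (x' + n).
Proof.
  apply qle_trans with (vg_a X x x' ⊗ qk V).
  { rewrite qtens_k_r; apply qle_refl. }
  eapply qle_trans; [| apply vg_compat].
  apply qtens_mono; [apply qle_refl | apply vg_refl].
Qed.

Variables (X Y : VGroup V) (f : X -> Y).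
Hypothesis f_add : forall x y, f (x + y) = f x + f y.

Lemma vhom_zero : f (vg_zero X) = vg_zero Y.
Proof.
  assert (idem : f (vg_zero X) = f (vg_zero X) + f (vg_zero X)).
  { now rewrite <- f_add, vg_add0l. }
  transitivity (- f (vg_zero X) + (f (vg_zero X) + f (vg_zero X))).
  - now rewrite vg_addA, vg_addNl, vg_add0l.
  - rewrite <- idem; apply vg_addNl.
Qed.

Lemma vhom_opp (x : X) : f (- x) = - f x.
Proof.
  rewrite <- (vg_add0r Y (f (- x))), <- (vg_addNr Y (f x)), vg_addA.
  now rewrite <- f_add, vg_addNl, vhom_zero, vg_add0l.
Qed.

Lemma fibre_translation (x1 x : X) :
  f x1 = f x -> exists m, x1 + m = x /\ forall x2, f (x2 + m) = f x2.
Proof.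
  intros fx1; exists (- x1 + x); split.
  - now rewrite vg_addA, vg_addNr, vg_add0l.
  - intros x2; now rewrite !f_add, vhom_opp, fx1, vg_addNl, vg_add0r.
Qed.

End VGroupFacts.

Lemma is_VHom_id (V : Quantale) (X : VGroup V) : is_VHom (fun x : X => x).
Proof. split; [reflexivity | intros; apply qle_refl]. Qed.

Lemma is_VHom_comp (V : Quantale) (X Y Z : VGroup V) (f : X -> Y) (g : Y -> Z) :
  is_VHom f -> is_VHom g -> is_VHom (fun x => g (f x)).
Proof.
  intros [f_add f_le] [g_add g_le]; split.
  - intros x y; now rewrite f_add, g_add.
  - intros x x'; eapply qle_trans; [apply f_le | apply g_le].
Qed.

Section InducedStructure.
Variables (V : Quantale) (X Y : VGroup V) (f : X -> Y).

Definition induced_a (y y' : Y) : V :=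
  qjoin V (fun v => exists x x', f x = y /\ f x' = y' /\ v = vg_a X x x').

Lemma induced_a_ub (x x' : X) : vg_a X x x' ⊑ induced_a (f x) (f x').
Proof. apply qjoin_ub; exists x, x'; auto. Qed.

Lemma induced_a_le (f_le : forall x x', vg_a X x x' ⊑ vg_a Y (f x) (f x')) (y y' : Y) :
  induced_a y y' ⊑ vg_a Y y y'.
Proof. apply qjoin_lub; intros v [x [x' [<- [<- ->]]]]; apply f_le. Qed.

Hypothesis f_add : forall x y, f (x + y) = f x + f y.

Lemma induced_a_proper (x : X) (y : Y) :
  induced_a (f x) y ⊑ qjoin V (fun v => exists x', f x' = y /\ v = vg_a X x x').
Proof.
  apply qjoin_lub; intros v [x1 [x2 [fx1 [<- ->]]]].
  destruct (fibre_translation f_add fx1) as [m [x1m fm]].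
  eapply qle_trans; [apply (vg_a_addr x1 x2 m) |].
  rewrite x1m; apply qjoin_ub; exists (x2 + m); auto.
Qed.

Lemma induced_a_open (x : X) (y : Y) :
  induced_a y (f x) ⊑ qjoin V (fun v => exists x', f x' = y /\ v = vg_a X x' x).
Proof.
  apply qjoin_lub; intros v [x1 [x2 [<- [fx2 ->]]]].
  destruct (fibre_translation f_add fx2) as [m [x2m fm]].
  eapply qle_trans; [apply (vg_a_addr x1 x2 m) |].
  rewrite x2m; apply qjoin_ub; exists (x1 + m); auto.
Qed.

Definition image := { y : Y | exists x, f x = y }.

Definition image_a (w w' : image) : V := induced_a (proj1_sig w) (proj1_sig w').

Definition image_add (w w' : image) : image.
Proof.
  exists (proj1_sig w + proj1_sig w').
  destruct w as [y [x <-]], w' as [y' [x' <-]].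
  exists (x + x'); apply f_add.
Defined.

Definition image_zero : image.
Proof. exists (vg_zero Y), (vg_zero X); now apply vhom_zero. Defined.

Definition image_opp (w : image) : image.
Proof.
  exists (- proj1_sig w).
  destruct w as [y [x <-]].
  exists (- x); now apply vhom_opp.
Defined.

Lemma image_refl (w : image) : qk V ⊑ image_a w w.
Proof.
  destruct w as [y [x <-]].
  eapply qle_trans; [apply vg_refl | apply induced_a_ub].
Qed.

(* Route the composite through the middle point: [induced_a_open] and
   [induced_a_proper] make both factors joins over pairs sharing the same x2. *)
Lemma image_trans (w1 w2 w3 : image) :
  image_a w1 w2 ⊗ image_a w2 w3 ⊑ image_a w1 w3.
Proof.
  destruct w2 as [y2 [x2 <-]]; unfold image_a; simpl.
  eapply qle_trans; [apply qtens_mono; [apply induced_a_open | apply induced_a_proper] |].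
  apply qtens_join_lub; intros s t [x1 [fx1 ->]] [x3 [fx3 ->]].
  eapply qle_trans; [apply vg_trans |].
  rewrite <- fx1, <- fx3; apply induced_a_ub.
Qed.

Lemma image_compat (w1 w2 w3 w4 : image) :
  image_a w1 w2 ⊗ image_a w3 w4 ⊑ image_a (image_add w1 w3) (image_add w2 w4).
Proof.
  apply qtens_join_lub; intros s t [x1 [x2 [fx1 [fx2 ->]]]] [x3 [x4 [fx3 [fx4 ->]]]].
  eapply qle_trans; [apply vg_compat |]; unfold image_a; simpl.
  rewrite <- fx1, <- fx2, <- fx3, <- fx4, <- !f_add; apply induced_a_ub.
Qed.

Lemma image_eq (w w' : image) : proj1_sig w = proj1_sig w' -> w = w'.
Proof. apply eq_sig_hprop; intros; apply proof_irrelevance. Qed.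

Definition image_vgroup : VGroup V.
Proof.
  refine {| vg_car := image; vg_a := image_a; vg_add := image_add;
            vg_zero := image_zero; vg_opp := image_opp;
            vg_refl := image_refl; vg_trans := image_trans;
            vg_compat := image_compat |};
  intros; apply image_eq; simpl.
  - apply vg_addA.
  - apply vg_add0l.
  - apply vg_add0r.
  - apply vg_addNl.
  - apply vg_addNr.
Defined.

Definition corestr (x : X) : image_vgroup := exist _ (f x) (ex_intro _ x eq_refl).

Lemma is_VHom_corestr : is_VHom corestr.
Proof.
  split.
  - intros x y; apply image_eq; apply f_add.
  - intros x x'; apply induced_a_ub.
Qed.

Lemma is_VHom_image_incl (f_le : forall x x', vg_a X x x' ⊑ vg_a Y (f x) (f x')) :
  is_VHom (fun w : image_vgroup => proj1_sig w).
Proof.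
  split; [reflexivity |].
  intros w w'; now apply induced_a_le.
Qed.

End InducedStructure.

Section RegularEpi.
Variables (V : Quantale) (X Y : VGroup V) (f : X -> Y).
Hypothesis f_regular : regular_epi f.

Lemma regular_epi_cancel (W : VGroup V) (u1 u2 : Y -> W) :
  is_VHom u1 -> is_VHom u2 -> (forall x, u1 (f x) = u2 (f x)) -> forall y, u1 y = u2 y.
Proof.
  intros u1_hom u2_hom u12 y.
  destruct f_regular as [f_hom [Z [g [h [_ [_ [fgh coeq]]]]]]].
  destruct (coeq W (fun x => u1 (f x)) (is_VHom_comp f_hom u1_hom))
    as [u [_ [_ u_unique]]].
  { intros z; now rewrite fgh. }
  rewrite (u_unique u1), (u_unique u2); auto.
Qed.

Lemma regular_epi_le_induced_a (y y' : Y) : vg_a Y y y' ⊑ induced_a f y y'.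
Proof.
  destruct f_regular as [[f_add f_le] [Z [g [h [_ [_ [fgh coeq]]]]]]].
  destruct (coeq _ (corestr f_add) (is_VHom_corestr f_add))
    as [u [u_hom [u_f _]]].
  { intros z; apply image_eq; apply fgh. }
  assert (u_section : forall y, proj1_sig (u y) = y).
  { apply (regular_epi_cancel
             (is_VHom_comp u_hom (is_VHom_image_incl f_add f_le)) (is_VHom_id Y)).
    intros x; now rewrite u_f. }
  destruct u_hom as [_ u_le].
  eapply qle_trans; [apply u_le |]; simpl; unfold image_a.
  rewrite !u_section; apply qle_refl.
Qed.

End RegularEpi.

Theorem theorem5p8 (V : Quantale) (HV : is_frame V)
  (X Y : VGroup V) (f : X -> Y) :
  regular_epi f -> is_open f /\ is_proper f.
Proof.
  intros f_regular.
  destruct (proj1 f_regular) as [f_add f_le].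
  split; intros x y; apply qle_antisym.
  - eapply qle_trans; [apply regular_epi_le_induced_a, f_regular |].
    exact (induced_a_open f_add x y).
  - apply qjoin_lub; intros v [x' [<- ->]]; apply f_le.
  - eapply qle_trans; [apply regular_epi_le_induced_a, f_regular |].
    exact (induced_a_proper f_add x y).
  - apply qjoin_lub; intros v [x' [<- ->]]; apply f_le.
Qed.
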